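(* Let $n$ be a power of two. An element $\sum_{0\le i\le n/2-1}a_i\mathfrak{r}^i+\sum_{0\le i\le n/2-1}b_i\mathfrak{s}\mathfrak{r}^i\in\mathbf{R}$ is invertible in $\mathbf{R}\otimes\mathbb{Q}$ if and only if for every odd $k$ with $1\le k\le n/2$, \[\Big|\sum_{0\le i\le n/2-1}a_ie^{2\pi\sqrt{-1}ki/n}\Big|-\Big|\sum_{0\le i\le n/2-1}b_ie^{2\pi\sqrt{-1}ki/n}\Big|\neq0,\] where $|\cdot|$ is the complex absolute value.
   Context: $D_{2n}$ is the dihedral group of order $2n$ generated by $\mathfrak{r},\mathfrak{s}$ with $\mathfrak{r}^n=\mathfrak{s}^2=1$, $\mathfrak{s}\mathfrak{r}\mathfrak{s}=\mathfrak{r}^{-1}$, and $\mathbf{R}=\mathbb{Z}[D_{2n}]/((\mathfrak{r}^{n/2}+1)\mathbb{Z}[D_{2n}])$ (quotient by a two-sided ideal), a free $\mathbb{Z}$-module with basis $\mathfrak{r}^i,\mathfrak{s}\mathfrak{r}^i$, $0\le i\le n/2-1$; the coefficients $a_i,b_i$ are integers. *)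

From mathcomp Require Import all_boot all_order all_algebra.
From mathcomp Require Import algC.
Set Implicit Arguments. Unset Strict Implicit. Unset Printing Implicit Defensive.
Import Order.TTheory GRing.Theory Num.Theory.
Local Open Scope ring_scope.

(* The Q-algebra  R (x) Q = Q[D_{2n}] / (r^m + 1),  m = n/2, n = 2m.
   An element is given by its coordinates on the basis  s^e r^i
   (e : bool, 0 <= i < m):  x = \sum x(e,i) s^e r^i. *)
Definition RQ (m : nat) := {ffun bool * 'I_m -> rat}.

(* Coefficient of the basis vector s^g r^l in the product
   (s^e r^i)(s^f r^j) computed in D_{2n} and reduced with r^n = 1, s^2 = 1,
   s r s = r^-1 and r^m = -1.  In D_{2n}:
   s^e r^i s^f r^j = s^(e+f) r^(k) with k = (if f then -i else i) + j. *)
Definition dcoef (m : nat) (e : bool) (i : nat) (f : bool) (j : nat)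
    (g : bool) (l : nat) : rat :=
  let k : int := (if f then - (i%:Z) else i%:Z) + j%:Z in
  let q : nat := absz (k %% (2 * m)%:Z)%Z in
  if (addb e f) == g then
    (if q == l then 1 else if q == (l + m)%N then -1 else 0)
  else 0.

Definition mulRQ (m : nat) (x y : RQ m) : RQ m :=
  [ffun gl : bool * 'I_m =>
     \sum_(ei : bool * 'I_m) \sum_(fj : bool * 'I_m)
        x ei * y fj * dcoef m ei.1 (val ei.2) fj.1 (val fj.2) gl.1 (val gl.2)].

Definition oneRQ (m : nat) : RQ m :=
  [ffun gl : bool * 'I_m => if (gl.1 == false) && (val gl.2 == 0%N) then 1 else 0].

Definition invertibleRQ (m : nat) (x : RQ m) : Prop :=
  exists y : RQ m, mulRQ x y = oneRQ m /\ mulRQ y x = oneRQ m.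

Definition eltRQ (m : nat) (a b : 'I_m -> int) : RQ m :=
  [ffun gl : bool * 'I_m => ((if gl.1 then b gl.2 else a gl.2)%:~R : rat)].

(* e^{2 pi sqrt(-1)/n} with n = 2m : the root of -1 of minimal argument *)
Definition zeta (m : nat) : algC := m.-root (-1).

Definition evalC (m : nat) (c : 'I_m -> int) (k : nat) : algC :=
  \sum_(i < m) (c i)%:~R * zeta m ^+ (k * i).

From HB Require Import structures.
From mathcomp Require Import all_boot all_order all_algebra algC.
From mathcomp Require Import zify ring.
Set Implicit Arguments. Unset Strict Implicit. Unset Printing Implicit Defensive.
Import Order.TTheory GRing.Theory Num.Theory.
Local Open Scope ring_scope.

(* Sending r to diag(w, w^-1) and s to the transposition matrix [[0,1],[1,0]]
   gives a representation of D_{2n} on C^2 which factors through R (x) Q when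
   w^(n/2) = -1.  The image of x = A(r) + s B(r) has A(w), A(w^-1) on the
   diagonal and B(w^-1), B(w) off it, so for w = zeta^k, k odd, these n/2
   representations separate the points of R (x) Q: the zeta^k are n/2 distinct
   roots of polynomials of degree < n/2.  Hence x is invertible iff all its
   images are (conversely, left multiplication by x is then injective on the
   finite dimensional space R (x) Q, hence onto).  The determinant of the
   image is A(w)A(w^-1) - B(w)B(w^-1) = |A(w)|^2 - |B(w)|^2 for |w| = 1, and
   it is unchanged by k |-> n - k, so only 1 <= k <= n/2 matter. *)

Lemma det_mx2 (R : comNzRingType) (A : 'M[R]_2) :
  \det A = A 0 0 * A 1 1 - A 0 1 * A 1 0.
Proof.
rewrite (expand_det_row A 0) !big_ord_recl big_ord0 addr0 /cofactor !det_mx11.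
rewrite !mxE /= expr0 expr1 mul1r mulN1r mulrN.
by congr (A _ _ * A _ _ - A _ _ * A _ _); apply: val_inj.
Qed.

Lemma exprz_modz (F : fieldType) (w : F) (N : nat) (k : int) :
  w ^+ N = 1 -> w ^ k = w ^ (k %% N)%Z.
Proof.
case: N => [|N] wN; first by rewrite modz0.
have w0 : w != 0 by apply: contra_eq_neq wN => ->; rewrite expr0n eq_sym oner_neq0.
rewrite {1}(divz_eq k N.+1) expfzDr // -exprz_exp exprzAC.
by rewrite -exprnP wN exp1rz mul1r.
Qed.

Lemma sum_bool_pair (V : nmodType) (I : finType) (G : bool * I -> V) :
  \sum_p G p = \sum_i G (true, i) + \sum_i G (false, i).
Proof.
rewrite (eq_bigr (fun p => G (p.1, p.2))); last by case.
by rewrite -(pair_bigA _ (fun e i => G (e, i))) big_bool.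
Qed.

Lemma coefs_eq0_of_roots (F : fieldType) (n : nat) (c : 'I_n -> F) (s : seq F) :
  uniq s -> (n <= size s)%N ->
  (forall u, u \in s -> \sum_(i < n) c i * u ^+ i = 0) -> c =1 (fun=> 0).
Proof.
case: n c => [|n] c s_uniq s_size s_roots [i //=] i_lt.
pose p := \poly_(i < n.+1) c (inord i).
have p_roots : all (root p) s.
  apply/allP => u /s_roots u_root; rewrite /root horner_poly.
  by rewrite (eq_bigr (fun j : 'I_n.+1 => c j * u ^+ j)) ?u_root // => j _; rewrite inord_val.
have p0 : p = 0.
  apply: contraTeq s_size => /max_poly_roots /(_ p_roots s_uniq) s_small.
  by rewrite -ltnNge (leq_trans s_small) // size_poly.
have -> : Ordinal i_lt = inord i by apply: val_inj; rewrite /= inordK.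
by have := congr1 (fun q : {poly F} => q`_i) p0; rewrite coef_poly i_lt coef0.
Qed.

Lemma prim_root_half (R : idomainType) (m : nat) (z : R) :
  (0 < m)%N -> (2 * m).-primitive_root z -> z ^+ m = -1.
Proof.
move=> m_gt0 prim; have : (z ^+ m) ^+ 2 == 1.
  by rewrite -exprM mulnC -(prim_order_dvd prim).
rewrite sqrf_eq1 -(prim_order_dvd prim) => /orP [|/eqP //].
by move=> /(dvdn_leq m_gt0); lia.
Qed.

Lemma prim_root_pow2 (R : numDomainType) (p : nat) (z : R) :
  z ^+ (2 ^ p) = -1 -> (2 ^ p.+1).-primitive_root z.
Proof.
move=> zp; have z1 : z ^+ (2 ^ p.+1) = 1 by rewrite expnS mulnC exprM zp sqrrN expr1n.
have [d prim_d /(dvdn_pfactor _ _ (isT : prime 2)) [e e_le d_eq]] :=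
  prim_order_exists (expn_gt0 2 p.+1) z1.
case: (ltnP e p.+1) => [e_lt | e_ge].
  have : (d %| 2 ^ p)%N by rewrite d_eq dvdn_exp2l.
  by rewrite (prim_order_dvd prim_d) zp lt_eqF // (lt_trans (ltrN10 R) ltr01).
by have -> : (2 ^ p.+1 = d)%N by rewrite d_eq; congr expn; lia.
Qed.

Lemma norm_unity_root (R : numDomainType) (n : nat) (z : R) :
  (0 < n)%N -> z ^+ n = 1 -> `|z| = 1.
Proof.
by move=> n_gt0 zn; apply/eqP; rewrite -(pexpr_eq1 n_gt0) ?normr_ge0 // -normrX zn normr1.
Qed.

Lemma odd_powers_sym (R : fieldType) (m : nat) (z : R) (P : R -> bool) :
  z ^+ (2 * m) = 1 -> (forall u, P u^-1 = P u) ->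
  (forall k, odd k -> (k <= m)%N -> P (z ^+ k)) ->
  forall k, odd k -> (k < 2 * m)%N -> P (z ^+ k).
Proof.
move=> z2m PV P_low k k_odd k_lt; case: (leqP k m) => [|k_gt]; first exact: P_low.
have zk_inv : (z ^+ k)^-1 = z ^+ (2 * m - k).
  by apply: mulr1_eq; rewrite -exprD subnKC // ltnW.
rewrite -PV zk_inv P_low ?leq_subLR ?oddB ?k_odd ?oddM //; lia.
Qed.

Lemma injective_linear_surj (K : fieldType) (vT : vectType K)
    (f : {linear vT -> vT}) :
  injective f -> forall v, exists u, f u = v.
Proof.
move=> f_inj v; have f_ker0 : lker (linfun f) == 0%VS.
  by apply/lker0P => u u'; rewrite !lfunE; apply: f_inj.
by exists ((linfun f)^-1%VF v); rewrite -[RHS](lker0_lfunVK f_ker0) lfunE.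
Qed.

Lemma ord2P (i : 'I_2) : i = 0 \/ i = 1.
Proof. by case: i => [[|[|//]]] ?; [left | right]; apply: val_inj. Qed.

Ltac mx2_ext :=
  apply/matrixP; intros i j; case: (ord2P i) => ->; case: (ord2P j) => ->;
  rewrite !mxE ?big_ord_recl ?big_ord0 /= ?mxE /=
    ?mul0r ?mulr0 ?mul1r ?mulr1 ?addr0 ?add0r.

Section DihedralMatrices.

Variable F : fieldType.

Definition rot_mx (u : F) : 'M[F]_2 :=
  \matrix_(i, j) if i == j then (if i == 0 then u else u^-1) else 0.

Definition refl_mx : 'M[F]_2 := \matrix_(i, j) (i != j)%:R.

Lemma rot_mxM (u v : F) : rot_mx u *m rot_mx v = rot_mx (u * v).
Proof. by mx2_ext; rewrite ?invfM. Qed.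

Lemma rot_mx1 : rot_mx 1 = 1%:M.
Proof. by mx2_ext; rewrite ?invr1. Qed.

Lemma rot_mxN (u : F) : rot_mx (- u) = - rot_mx u.
Proof. by mx2_ext; rewrite ?invrN ?oppr0. Qed.

Lemma refl_mx_sqr : refl_mx *m refl_mx = 1%:M.
Proof. by mx2_ext. Qed.

Lemma rot_refl_mx (u : F) : rot_mx u *m refl_mx = refl_mx *m rot_mx u^-1.
Proof. by mx2_ext; rewrite ?invrK. Qed.

Definition dihedral_mx (w : F) (e : bool) (k : int) : 'M[F]_2 :=
  if e then refl_mx *m rot_mx (w ^ k) else rot_mx (w ^ k).

Lemma dihedral_mxM (w : F) (e f : bool) (i j : int) : w != 0 ->
  dihedral_mx w e i *m dihedral_mx w f j
  = dihedral_mx w (e (+) f) ((if f then - i else i) + j).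
Proof.
move=> w0; rewrite /dihedral_mx expfzDr //; case: e; case: f => /=.
- rewrite -!mulmxA (mulmxA (rot_mx _)) rot_refl_mx -mulmxA mulmxA.
  by rewrite refl_mx_sqr mul1mx rot_mxM invr_expz.
- by rewrite -mulmxA rot_mxM.
- by rewrite mulmxA rot_refl_mx -mulmxA rot_mxM invr_expz.
- by rewrite rot_mxM.
Qed.

Lemma dihedral_mx_antiperiod (w : F) (m : nat) (e : bool) (q : nat) :
  w ^+ m = -1 -> dihedral_mx w e (q + m)%N = - dihedral_mx w e q.
Proof.
move=> wm; rewrite /dihedral_mx exprzD_nat -!exprnP wm mulrN1 rot_mxN.
by case: e; rewrite ?mulmxN.
Qed.

Lemma refl_rot_mxE (u : F) :
  refl_mx *m rot_mx u
  = \matrix_(i, j) if i == j then 0 else (if i == 0 then u^-1 else u).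
Proof. by mx2_ext. Qed.

End DihedralMatrices.

Arguments refl_mx {F}.

Definition lmulRQ (m : nat) (x : RQ m) (u : {ffun bool * 'I_m -> rat^o}) :
  {ffun bool * 'I_m -> rat^o} := mulRQ x u.

Fact lmulRQ_is_linear (m : nat) (x : RQ m) : linear (lmulRQ x).
Proof.
move=> a u v; apply/ffunP => gl; rewrite /lmulRQ !ffunE scaler_sumr -big_split.
apply: eq_bigr => ei _; rewrite scaler_sumr -big_split.
by apply: eq_bigr => fj _; rewrite !ffunE /= /GRing.scale /=; ring.
Qed.

HB.instance Definition _ (m : nat) (x : RQ m) :=
  GRing.isLinear.Build rat _ _ *:%R (lmulRQ x) (lmulRQ_is_linear x).

Section Representation.

Variables (F : numFieldType) (m : nat).
Hypothesis m_gt0 : (0 < m)%N.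

Section At.

Variable w : F.
Hypothesis wm : w ^+ m = -1.

Let w2m : w ^+ (2 * m) = 1.
Proof. by rewrite mulnC exprM wm sqrrN expr1n. Qed.

Let w_neq0 : w != 0.
Proof.
apply/eqP => w0; move: w2m; rewrite w0 expr0n.
have -> : (2 * m == 0)%N = false by apply/eqP; lia.
by move/eqP; rewrite eq_sym oner_eq0.
Qed.

Lemma dcoef_scale (e : bool) (i : nat) (f : bool) (j : nat) (g : bool) (l : 'I_m) :
  let q := absz (((if f then - (i%:Z) else i%:Z) + j%:Z) %% (2 * m)%:Z)%Z in
  ratr (dcoef m e i f j g l) *: dihedral_mx w g l
  = if (g == e (+) f) && (l == q %% m :> nat)%N then dihedral_mx w g q else 0.
Proof.
move=> q; have q_lt : (q < 2 * m)%N.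
  rewrite /q -ltz_nat gez0_abs ?modz_ge0 ?ltz_pmod //; rewrite ?ltz_nat; lia.
rewrite /dcoef -/q eq_sym; case: eqP => [_|]; last by rewrite rmorph0 scale0r.
case: (ltnP q m) => [q_lt_m | q_ge_m].
  rewrite modn_small // [l == q :> nat]eq_sym.
  case: eqP => [-> | _]; first by rewrite rmorph1 scale1r.
  have -> : (q == l + m)%N = false by apply/eqP; lia.
  by rewrite rmorph0 scale0r.
have -> : (q == l :> nat) = false by apply/eqP; have := ltn_ord l; lia.
have -> : (q %% m = q - m)%N by rewrite -{1}(subnK q_ge_m) modnDr modn_small //; lia.
have -> : (q == l + m)%N = (l == q - m :> nat)%N by apply/eqP/eqP; lia.
case: eqP => [l_eq | _]; last by rewrite rmorph0 scale0r.
by rewrite rmorphN1 scaleN1r -(subnK q_ge_m) -l_eq dihedral_mx_antiperiod // opprK.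
Qed.

Lemma dcoef_dihedral_mx (e : bool) (i : nat) (f : bool) (j : nat) :
  \sum_(gl : bool * 'I_m) ratr (dcoef m e i f j gl.1 gl.2) *: dihedral_mx w gl.1 gl.2
  = dihedral_mx w e i *m dihedral_mx w f j.
Proof.
set k := (if f then - (i%:Z) else i%:Z) + j%:Z.
set q := absz (k %% (2 * m)%:Z)%Z.
have q_mod : (k %% (2 * m)%:Z)%Z = q by rewrite gez0_abs // modz_ge0 // eqz_nat; lia.
have -> : dihedral_mx w e i *m dihedral_mx w f j = dihedral_mx w (e (+) f) q.
  by rewrite dihedral_mxM // /dihedral_mx (exprz_modz _ w2m) q_mod.
under eq_bigr => gl _ do rewrite dcoef_scale -/k -/q.
by rewrite -big_mkcond (big_pred1 (e (+) f, Ordinal (ltn_pmod q m_gt0))).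
Qed.

Definition rep_mx (x : RQ m) : 'M[F]_2 :=
  \sum_(gl : bool * 'I_m) ratr (x gl) *: dihedral_mx w gl.1 gl.2.

Lemma rep_mxM (x y : RQ m) : rep_mx (mulRQ x y) = rep_mx x *m rep_mx y.
Proof.
rewrite /rep_mx mulmx_suml.
under eq_bigr => gl _ do rewrite ffunE rmorph_sum scaler_suml.
rewrite exchange_big; apply: eq_bigr => ei _.
under eq_bigr => gl _ do rewrite rmorph_sum scaler_suml.
rewrite exchange_big mulmx_sumr; apply: eq_bigr => fj _.
rewrite -scalemxAl -scalemxAr scalerA -dcoef_dihedral_mx scaler_sumr.
by apply: eq_bigr => gl _; rewrite !rmorphM scalerA.
Qed.

Lemma rep_mx1 : rep_mx (oneRQ m) = 1%:M.
Proof.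
rewrite /rep_mx (bigD1 (false, Ordinal m_gt0)) //= ffunE rmorph1 scale1r.
rewrite /dihedral_mx expr0z rot_mx1 big1 ?addr0 // => -[g l] /=.
rewrite xpair_eqE ffunE /= => /nandP [|ne]; case: g => //=; rewrite ?rmorph0 ?scale0r //.
by rewrite ifN // rmorph0 scale0r.
Qed.

End At.

Definition evalQ (c : 'I_m -> rat) (u : F) : F := \sum_(i < m) ratr (c i) * u ^+ i.

Definition rot_part (x : RQ m) (i : 'I_m) : rat := x (false, i).
Definition refl_part (x : RQ m) (i : 'I_m) : rat := x (true, i).

Lemma rep_mxE (w : F) (x : RQ m) :
  rep_mx w x = \matrix_(i, j) if i == j
     then evalQ (rot_part x) (if i == 0 then w else w^-1)
     else evalQ (refl_part x) (if i == 0 then w^-1 else w).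
Proof.
have sum_mul0 (c : 'I_m -> F) : \sum_(l < m) c l * 0 = 0.
  by rewrite big1 // => l _; rewrite mulr0.
apply/matrixP => i j; rewrite mxE /rep_mx summxE sum_bool_pair /=.
under eq_bigr => l _ do rewrite refl_rot_mxE !mxE.
under [X in _ + X]eq_bigr => l _ do rewrite !mxE.
case: (ord2P i) => ->; case: (ord2P j) => -> /=;
  rewrite sum_mul0 ?add0r ?addr0;
  by apply: eq_bigr => l _; rewrite -exprnP ?exprVn.
Qed.

Lemma det_rep_mx (w : F) (x : RQ m) :
  \det (rep_mx w x) = evalQ (rot_part x) w * evalQ (rot_part x) w^-1
                    - evalQ (refl_part x) w * evalQ (refl_part x) w^-1.
Proof. by rewrite rep_mxE det_mx2 !mxE /= [_ w^-1 * _]mulrC. Qed.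

Lemma det_rep_mxV (w : F) (x : RQ m) : \det (rep_mx w^-1 x) = \det (rep_mx w x).
Proof. by rewrite !det_rep_mx invrK ![_ w^-1 * _]mulrC. Qed.

Lemma evalQ_inj (z : F) (c d : 'I_m -> rat) : (2 * m).-primitive_root z ->
  (forall k, odd k -> (k < 2 * m)%N -> evalQ c (z ^+ k) = evalQ d (z ^+ k)) ->
  c =1 d.
Proof.
move=> prim cd i; apply/eqP; rewrite -(fmorph_eq (@ratr F)) -subr_eq0; apply/eqP.
pose s := [seq z ^+ (2 * j + 1) | j <- iota 0 m].
apply: (@coefs_eq0_of_roots _ _ (fun i => ratr (c i) - ratr (d i)) s) => [||u].
- rewrite map_inj_in_uniq ?iota_uniq // => j j'; rewrite !mem_iota /= => j_lt j'_lt.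
  by move/eqP; rewrite (eq_prim_root_expr prim) !modn_small; lia.
- by rewrite size_map size_iota.
case/mapP => j; rewrite mem_iota => /andP [_ j_lt] ->.
under eq_bigr => l _ do rewrite mulrBl.
rewrite sumrB; apply/eqP; rewrite subr_eq0; apply/eqP.
by apply: cd; [rewrite oddD oddM | lia].
Qed.

Lemma rep_mx_inj (z : F) (x y : RQ m) : (2 * m).-primitive_root z ->
  (forall k, odd k -> (k < 2 * m)%N -> rep_mx (z ^+ k) x = rep_mx (z ^+ k) y) ->
  x = y.
Proof.
move=> prim xy; apply/ffunP => -[[] l].
  apply: (evalQ_inj prim (c := refl_part x) (d := refl_part y)) => k ko kl.
  by have := congr1 (fun M : 'M_2 => M 1 0) (xy k ko kl); rewrite !rep_mxE !mxE.
apply: (evalQ_inj prim (c := rot_part x) (d := rot_part y)) => k ko kl.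
by have := congr1 (fun M : 'M_2 => M 0 0) (xy k ko kl); rewrite !rep_mxE !mxE.
Qed.

Lemma invertibleRQ_rep_unit (z : F) (x : RQ m) : (2 * m).-primitive_root z ->
  invertibleRQ x <->
  (forall k, odd k -> (k < 2 * m)%N -> rep_mx (z ^+ k) x \in unitmx).
Proof.
move=> prim; have zk_m k : odd k -> (z ^+ k) ^+ m = -1.
  by move=> ko; rewrite exprAC (prim_root_half m_gt0 prim) -signr_odd ko.
split=> [[y [xy _]] k ko kl | x_unit].
  have := congr1 (rep_mx (z ^+ k)) xy.
  by rewrite rep_mxM ?zk_m // rep_mx1 => /mulmx1_unit [].
have lmul_inj : injective (lmulRQ x).
  move=> u v uv; apply: rep_mx_inj prim _ => k ko kl.
  have := congr1 (rep_mx (z ^+ k)) uv; rewrite /lmulRQ !rep_mxM ?zk_m // => xuv.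
  by rewrite -(mulKmx (x_unit k ko kl) (rep_mx _ u)) xuv mulKmx ?x_unit.
have [y xy1] := injective_linear_surj lmul_inj (oneRQ m).
have xy : mulRQ x y = oneRQ m := xy1.
exists y; split => //; apply: rep_mx_inj prim _ => k ko kl.
rewrite rep_mxM ?zk_m // rep_mx1; apply: mulmx1C.
by rewrite -rep_mxM ?zk_m // xy rep_mx1.
Qed.

End Representation.

Lemma evalQ_conj (m : nat) (c : 'I_m -> rat) (u : algC) :
  `|u| = 1 -> evalQ c u^-1 = (evalQ c u)^*.
Proof.
move=> u1; rewrite invC_norm u1 expr1n invr1 mul1r rmorph_sum.
by apply: eq_bigr => i _; rewrite rmorphM rmorphXn fmorph_rat.
Qed.

Lemma rep_mx_unit_norm (m : nat) (u : algC) (x : RQ m) : `|u| = 1 ->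
  (rep_mx u x \in unitmx) = (`|evalQ (rot_part x) u| != `|evalQ (refl_part x) u|).
Proof.
move=> u1; rewrite unitmxE unitfE det_rep_mx !evalQ_conj // -!normCK.
by rewrite subr_eq0 eqrXn2.
Qed.

Lemma evalQ_rot_part_eltRQ (m : nat) (a b : 'I_m -> int) (k : nat) :
  evalQ (rot_part (eltRQ a b)) (zeta m ^+ k) = evalC a k.
Proof. by apply: eq_bigr => i _; rewrite /rot_part ffunE rmorph_int exprM. Qed.

Lemma evalQ_refl_part_eltRQ (m : nat) (a b : 'I_m -> int) (k : nat) :
  evalQ (refl_part (eltRQ a b)) (zeta m ^+ k) = evalC b k.
Proof. by apply: eq_bigr => i _; rewrite /refl_part ffunE rmorph_int exprM. Qed.

Theorem lemma4 (p : nat) (a b : 'I_(2 ^ p) -> int) :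
  invertibleRQ (eltRQ a b) <->
  (forall k : nat, odd k -> (1 <= k <= 2 ^ p)%N ->
     `|evalC a k| - `|evalC b k| != 0).
Proof.
set m := (2 ^ p)%N; have m_gt0 : (0 < m)%N by rewrite expn_gt0.
have prim : (2 * m).-primitive_root (zeta m).
  by rewrite -expnS; apply: prim_root_pow2; rewrite rootCK.
have unit_norm k : (rep_mx (zeta m ^+ k) (eltRQ a b) \in unitmx)
                   = (`|evalC a k| != `|evalC b k|).
  have zk1 : `|zeta m ^+ k| = 1.
    by rewrite normrX (norm_unity_root _ (prim_expr_order prim)) ?expr1n ?muln_gt0.
  by rewrite rep_mx_unit_norm // evalQ_rot_part_eltRQ evalQ_refl_part_eltRQ.
rewrite (invertibleRQ_rep_unit m_gt0 _ prim).
split=> [x_unit k k_odd /andP [_ k_le] | norm_neq].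
  by rewrite subr_eq0 -unit_norm x_unit //; lia.
apply: (odd_powers_sym (P := fun u => rep_mx u (eltRQ a b) \in unitmx)).
- exact: prim_expr_order.
- by move=> u; rewrite /= !unitmxE det_rep_mxV.
move=> k k_odd k_le; rewrite unit_norm -subr_eq0 norm_neq // k_le andbT.
by case: k k_odd {k_le}.
Qed.
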